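(* Fix an integer $q_1\ge2$. For any positive real numbers $s,t$ and any integer $r\ge4$, $$\lim_{m\to\infty}\frac{a^{\operatorname{int2,r}}_m(t)}{m^s}=0,\qquad \lim_{m\to\infty}\frac{a^{\operatorname{int1,r}}_m(t)}{a^{\operatorname{int2,r}}_m(s)}=0,\qquad \lim_{m\to\infty}\frac{(\ln m)^t}{a^{\operatorname{int1,r}}_m(s)}=0.$$
   Context: $\Gamma$ denotes the Gamma function; for an integer $r\ge4$, $\Gamma_r:\mathbb{R}^+\to\mathbb{R}^+$ is $\Gamma_r(x)=[\Gamma(x^{1/r}+1)]^r$, which is increasing (hence invertible onto its image). Define $a^{\operatorname{int1,r}}_m(t)=m^{t/\Gamma_r^{-1}(\ln m/\ln q_1)}$ and $a^{\operatorname{int2,r}}_m(t)=m^{t/[\Gamma_r^{-1}(\ln m/\ln q_1)]^{(r-2)/r}}$ (for $m$ large enough that these are defined). *)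

From Stdlib Require Import Reals ClassicalEpsilon.
From Coquelicot Require Import Coquelicot.
Open Scope R_scope.

Definition Gamma (x : R) : R :=
  RInt_gen (fun u => Rpower u (x - 1) * exp (- u)) (at_right 0) (Rbar_locally p_infty).

Definition Gamma_r (r : nat) (x : R) : R :=
  (Gamma (Rpower x (/ INR r) + 1)) ^ r.

(* Gamma_r^{-1}(y): a positive x with Gamma_r x = y (the unique one whenever
   y is in the image of the injective part; chosen arbitrarily otherwise). *)
Definition Gamma_r_inv (r : nat) (y : R) : R :=
  epsilon (inhabits 0) (fun x => 0 < x /\ Gamma_r r x = y).

Definition a_int1 (q1 r m : nat) (t : R) : R :=
  Rpower (INR m) (t / Gamma_r_inv r (ln (INR m) / ln (INR q1))).

Definition a_int2 (q1 r m : nat) (t : R) : R :=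
  Rpower (INR m) (t / Rpower (Gamma_r_inv r (ln (INR m) / ln (INR q1))) ((INR r - 2) / INR r)).

(* Write x_m = Gamma_r^{-1}(ln m / ln q1), so that ln m = ln q1 * Gamma(x_m^(1/r) + 1)^r.
   The crude bounds T^(v-1) e^(-(T+1)) <= Gamma(v) <= 2 (2v)^(v-1), read off the integral,
   give x_m -> oo and ln m >= ln q1 * x_m^2 for large m.  With p = (r-2)/r in (0,1) the three
   quotients are exp of (t x^-p - s) ln m, of (t x^-(1-p) - s) ln m / x^p and of
   t ln ln m - s W with W = ln m / x >= ln q1 * x, and each exponent tends to -oo.

   Gamma is an improper Riemann integral, which means nothing unless
   it converges: this is proved once for every continuous integrand dominated by C e^(-u/2).
   And Gamma_r^{-1} is an arbitrary choice unless Gamma_r attains the value: Gamma is locally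
   Lipschitz (the v-derivative of the integrand is again dominated) and unbounded, so the
   intermediate value theorem makes Gamma_r attain every value beyond 8^r. *)

From Stdlib Require Import Reals Lra Lia Ranalysis5 ClassicalEpsilon.
From Coquelicot Require Import Coquelicot.
Open Scope R_scope.

(** * Improper integrals of exponentially dominated functions *)

Local Notation zero_infty := (filter_prod (at_right 0) (Rbar_locally p_infty)).

Lemma zero_infty_proper : ProperFilter zero_infty.
Proof.
  exact (@filter_prod_proper _ _ _ _ (at_right_proper_filter 0) (Rbar_locally_filter p_infty)).
Qed.

Lemma zero_infty_pos : zero_infty (fun ab => 0 < fst ab /\ 0 < snd ab).
Proof.
  exists (fun a => 0 < a) (fun b => 0 < b).
  - exists (mkposreal 1 Rlt_0_1); intros y _ Hy; exact Hy.
  - exists 0; intros x Hx; exact Hx.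
  - intros a b Ha Hb; split; assumption.
Qed.

Lemma is_RInt_exp_half (C a b : R) :
  is_RInt (fun u => C * exp (- u / 2)) a b (2 * C * (exp (- a / 2) - exp (- b / 2))).
Proof.
  replace (2 * C * (exp (- a / 2) - exp (- b / 2)))
    with (minus (-2 * C * exp (- b / 2)) (-2 * C * exp (- a / 2)))
    by (unfold minus, plus, opp; simpl; ring).
  apply (is_RInt_derive (fun u => -2 * C * exp (- u / 2))).
  - intros x _; auto_derive; [auto | unfold Rdiv; field].
  - intros x _; apply (ex_derive_continuous (fun u => C * exp (- u / 2))); auto_derive; auto.
Qed.

Lemma exp_le (x y : R) : x <= y -> exp x <= exp y.
Proof. intros [Hlt | ->]; [left; apply exp_increasing; exact Hlt | right; reflexivity]. Qed.

Lemma exp_div (x y : R) : exp x / exp y = exp (x - y).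
Proof. unfold Rdiv, Rminus; rewrite exp_plus, exp_Ropp; reflexivity. Qed.

Lemma exp_half_le_1 (a : R) : 0 <= a -> 0 < exp (- a / 2) <= 1.
Proof.
  intros Ha; split; [apply exp_pos|].
  rewrite <- exp_0; apply exp_le; lra.
Qed.

Lemma exp_neg_inv_lt (x : R) : 0 < x -> exp (- / x) < x.
Proof.
  intros Hx; rewrite exp_Ropp; rewrite <- (Rinv_inv x) at 2.
  apply Rinv_lt_contravar; [apply Rmult_lt_0_compat; [apply Rinv_0_lt_compat, Hx | apply exp_pos]|].
  assert (H := exp_ineq1_le (/ x)); lra.
Qed.

Lemma Rabs_exp_half_sub_near_0 (eta a a' : R) : 0 < a < eta -> 0 < a' < eta ->
  Rabs (exp (- a / 2) - exp (- a' / 2)) <= eta / 2.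
Proof.
  intros Ha Ha'; assert (Hlow := exp_ineq1_le (- eta / 2)).
  assert (exp (- eta / 2) <= exp (- a / 2) <= 1)
    by (split; [apply exp_le | apply exp_half_le_1]; lra).
  assert (exp (- eta / 2) <= exp (- a' / 2) <= 1)
    by (split; [apply exp_le | apply exp_half_le_1]; lra).
  apply Rabs_le; lra.
Qed.

Lemma Rabs_exp_half_sub_near_infty (eta b b' : R) : 0 < eta -> 2 / eta < b -> 2 / eta < b' ->
  Rabs (exp (- b / 2) - exp (- b' / 2)) < eta.
Proof.
  intros Heta Hb Hb'; assert (Hup := exp_neg_inv_lt eta Heta).
  replace (- / eta) with (- (2 / eta) / 2) in Hup by (field; lra).
  assert (0 < exp (- b / 2) <= exp (- (2 / eta) / 2))
    by (split; [apply exp_pos | apply exp_le; lra]).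
  assert (0 < exp (- b' / 2) <= exp (- (2 / eta) / 2))
    by (split; [apply exp_pos | apply exp_le; lra]).
  apply Rabs_lt_between; lra.
Qed.

Section ExpDominated.

Variables (h : R -> R) (C : R).
Hypothesis h_cont : forall u, 0 < u -> continuous h u.
Hypothesis h_le : forall u, 0 < u -> Rabs (h u) <= C * exp (- u / 2).

Lemma ex_RInt_dominated (a b : R) : 0 < a -> 0 < b -> ex_RInt h a b.
Proof.
  intros Ha Hb; apply (ex_RInt_continuous (V := R_CompleteNormedModule)).
  intros z [Hz _]; apply h_cont.
  apply Rlt_le_trans with (Rmin a b); [apply Rmin_glb_lt|]; assumption.
Qed.

Lemma RInt_dominated_le (a b : R) : 0 < a <= b ->
  Rabs (RInt h a b) <= 2 * C * (exp (- a / 2) - exp (- b / 2)).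
Proof.
  intros [Ha Hab].
  assert (Hh : ex_RInt h a b) by (apply ex_RInt_dominated; lra).
  rewrite <- (is_RInt_unique _ _ _ _ (is_RInt_exp_half C a b)).
  eapply Rle_trans; [apply abs_RInt_le; assumption|].
  apply RInt_le; [exact Hab | apply (ex_RInt_norm h a b Hh) | eexists; apply is_RInt_exp_half |].
  intros x Hx; apply h_le; lra.
Qed.

Lemma RInt_dominated_abs_le (a b : R) : 0 < a -> 0 < b ->
  Rabs (RInt h a b) <= 2 * C * Rabs (exp (- a / 2) - exp (- b / 2)).
Proof.
  intros Ha Hb; destruct (Rle_or_lt a b) as [Hab | Hba].
  - rewrite (Rabs_right (_ - _)) by (apply Rge_minus, Rle_ge, exp_le; lra).
    apply RInt_dominated_le; lra.
  - rewrite <- (opp_RInt_swap (V := R_CompleteNormedModule)) by (apply ex_RInt_dominated; lra).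
    unfold opp; simpl; rewrite Rabs_Ropp.
    rewrite Rabs_minus_sym, (Rabs_right (_ - _)) by (apply Rge_minus, Rle_ge, exp_le; lra).
    apply RInt_dominated_le; lra.
Qed.

Lemma dominated_coef_ge0 : 0 <= C.
Proof.
  destruct (Rle_or_lt 0 C) as [HC | HC]; [exact HC | exfalso].
  assert (Hneg : C * exp (- (1) / 2) < 0) by (apply Rmult_neg_pos; [exact HC | apply exp_pos]).
  assert (H := h_le 1 Rlt_0_1); assert (Habs := Rabs_pos (h 1)); lra.
Qed.

(* The two integrals differ by the integrals over [a, a'] and [b', b]. *)
Lemma RInt_dominated_sub_le (eta a b a' b' : R) : 0 < a < eta -> 0 < a' < eta ->
  2 / eta < b -> 2 / eta < b' -> Rabs (RInt h a' b' - RInt h a b) <= 3 * C * eta.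
Proof.
  intros Ha Ha' Hb Hb'; assert (HC := dominated_coef_ge0).
  assert (Hb0 : 0 < 2 / eta) by (apply Rdiv_lt_0_compat; lra).
  assert (Hex1 : ex_RInt h a a') by (apply ex_RInt_dominated; lra).
  assert (Hex2 : ex_RInt h a' b') by (apply ex_RInt_dominated; lra).
  assert (Hex3 : ex_RInt h b' b) by (apply ex_RInt_dominated; lra).
  rewrite <- (RInt_Chasles (V := R_CompleteNormedModule) h a a' b Hex1)
    by (apply (ex_RInt_Chasles (V := R_CompleteNormedModule) h a' b' b); assumption).
  rewrite <- (RInt_Chasles (V := R_CompleteNormedModule) h a' b' b Hex2 Hex3).
  unfold plus; simpl.
  replace (RInt h a' b' - (RInt h a a' + (RInt h a' b' + RInt h b' b)))
    with (- (RInt h a a' + RInt h b' b)) by ring.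
  rewrite Rabs_Ropp; eapply Rle_trans; [apply Rabs_triang|].
  assert (H0 := Rabs_exp_half_sub_near_0 eta a a' Ha Ha').
  assert (Hoo := Rabs_exp_half_sub_near_infty eta b' b ltac:(lra) Hb' Hb).
  assert (H1 := RInt_dominated_abs_le a a' ltac:(lra) ltac:(lra)).
  assert (H2 := RInt_dominated_abs_le b' b ltac:(lra) ltac:(lra)).
  assert (2 * C * Rabs (exp (- a / 2) - exp (- a' / 2)) <= 2 * C * (eta / 2))
    by (apply Rmult_le_compat_l; lra).
  assert (2 * C * Rabs (exp (- b' / 2) - exp (- b / 2)) <= 2 * C * eta)
    by (apply Rmult_le_compat_l; lra).
  lra.
Qed.

Lemma RInt_dominated_cvg :
  filterlim (fun ab => RInt h (fst ab) (snd ab)) zero_infty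
    (locally (RInt_gen h (at_right 0) (Rbar_locally p_infty))).
Proof.
  assert (HC := dominated_coef_ge0).
  destruct (proj1 (filterlim_locally_cauchy (F := zero_infty)
                     (FF := zero_infty_proper) (fun ab => RInt h (fst ab) (snd ab))))
    as [l Hl].
  - intros eps; set (eta := eps / (4 * (C + 1))).
    assert (Heta : 0 < eta) by (apply Rdiv_lt_0_compat; [apply cond_pos | lra]).
    exists (fun ab => 0 < fst ab < eta /\ 2 / eta < snd ab); split.
    + exists (fun a => 0 < a < eta) (fun b => 2 / eta < b).
      * exists (mkposreal eta Heta); intros a Ha Hpos; split; [exact Hpos|].
        apply Rabs_lt_between in Ha; unfold minus, plus, opp in Ha; simpl in Ha; lra.
      * exists (2 / eta); auto.
      * intros a b Ha Hb; split; assumption.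
    + intros [a b] [a' b'] [Ha Hb] [Ha' Hb']; simpl in *.
      change (Rabs (RInt h a' b' - RInt h a b) < eps).
      eapply Rle_lt_trans; [apply RInt_dominated_sub_le; eassumption|].
      assert (Heps : pos eps = 4 * (C + 1) * eta) by (unfold eta; field; lra).
      nra.
  - assert (Hgen : is_RInt_gen h (at_right 0) (Rbar_locally p_infty) l).
    { apply (filterlimi_lim_ext_loc (fun ab => RInt h (fst ab) (snd ab))); [|exact Hl].
      apply (filter_imp (fun ab => 0 < fst ab /\ 0 < snd ab)); [|exact zero_infty_pos].
      intros [a b] [Ha Hb]; apply (RInt_correct (V := R_CompleteNormedModule)).
      apply ex_RInt_dominated; assumption. }
    rewrite (is_RInt_gen_unique (V := R_CompleteNormedModule) _ _ Hgen); exact Hl.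
Qed.

Lemma lim_RInt_dominated_abs_le (l : R) :
  filterlim (fun ab => RInt h (fst ab) (snd ab)) zero_infty (locally l) ->
  Rabs l <= 2 * C.
Proof.
  intros Hl; assert (HC := dominated_coef_ge0).
  assert (Hev : zero_infty (fun ab => Rabs (RInt h (fst ab) (snd ab)) <= 2 * C)).
  { apply (filter_imp (fun ab => 0 < fst ab /\ 0 < snd ab)); [|exact zero_infty_pos].
    intros [a b] [Ha Hb]; simpl.
    eapply Rle_trans; [apply RInt_dominated_abs_le; assumption|].
    rewrite <- (Rmult_1_r (2 * C)) at 2; apply Rmult_le_compat_l; [lra|].
    assert (Hexp_a := exp_half_le_1 a (Rlt_le _ _ Ha)).
    assert (Hexp_b := exp_half_le_1 b (Rlt_le _ _ Hb)).
    apply Rabs_le; lra. }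
  apply Rabs_le; split.
  - apply (closed_filterlim_loc _ (fun y => - (2 * C) <= y) l Hl);
      [|apply closed_ge].
    apply (filter_imp _ _ (fun ab H => proj1 (proj1 (Rabs_le_between _ _) H)) Hev).
  - apply (closed_filterlim_loc _ (fun y => y <= 2 * C) l Hl);
      [|apply closed_le].
    apply (filter_imp _ _ (fun ab H => proj2 (proj1 (Rabs_le_between _ _) H)) Hev).
Qed.

End ExpDominated.

(** * Bounds and regularity of Gamma *)

Definition gamma_integrand (v u : R) : R := Rpower u (v - 1) * exp (- u).

Lemma gamma_integrand_continuous (v u : R) : 0 < u -> continuous (gamma_integrand v) u.
Proof.
  intros Hu; unfold gamma_integrand, Rpower.
  apply (ex_derive_continuous (fun u => exp ((v - 1) * ln u) * exp (- u))).
  auto_derive; lra.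
Qed.

Lemma ex_RInt_gamma_integrand (v a b : R) : 0 < a -> 0 < b -> ex_RInt (gamma_integrand v) a b.
Proof.
  apply ex_RInt_dominated; intros u Hu; apply gamma_integrand_continuous, Hu.
Qed.

Lemma gamma_integrand_pos (v u : R) : 0 < gamma_integrand v u.
Proof. apply Rmult_lt_0_compat; [apply exp_pos | apply exp_pos]. Qed.

(* [u ^ p <= (2 p + 2) ^ p * exp (u / 2)], from [ln y <= y - 1] at [y = u / (2 p + 2)] *)
Lemma mul_ln_le (p u : R) : 0 <= p -> 0 < u -> p * ln u <= p * ln (2 * p + 2) + u / 2.
Proof.
  intros Hp Hu.
  assert (H := exp_ineq1_le (ln (u / (2 * p + 2)))).
  rewrite exp_ln, ln_div in H by (try apply Rdiv_lt_0_compat; lra).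
  assert (p * (ln u - ln (2 * p + 2)) <= p * (u / (2 * p + 2) - 1))
    by (apply Rmult_le_compat_l; lra).
  assert (p * (u / (2 * p + 2)) <= u / 2).
  { replace (p * (u / (2 * p + 2))) with (u / 2 - u / (2 * p + 2)) by (field; lra).
    assert (0 < u / (2 * p + 2)) by (apply Rdiv_lt_0_compat; lra); lra. }
  nra.
Qed.

Lemma gamma_integrand_le (v u : R) : 1 <= v -> 0 < u ->
  Rabs (gamma_integrand v u) <= exp ((v - 1) * ln (2 * v)) * exp (- u / 2).
Proof.
  intros Hv Hu; rewrite Rabs_right by (left; apply gamma_integrand_pos).
  unfold gamma_integrand, Rpower; rewrite <- !exp_plus; apply exp_le.
  assert (H := mul_ln_le (v - 1) u ltac:(lra) Hu).
  replace (2 * (v - 1) + 2) with (2 * v) in H by ring; lra.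
Qed.

Lemma Gamma_cvg (v : R) : 1 <= v ->
  filterlim (fun ab => RInt (gamma_integrand v) (fst ab) (snd ab)) zero_infty
    (locally (Gamma v)).
Proof.
  intros Hv; apply (RInt_dominated_cvg _ (exp ((v - 1) * ln (2 * v)))).
  - intros u Hu; apply gamma_integrand_continuous, Hu.
  - intros u Hu; apply gamma_integrand_le; assumption.
Qed.

Lemma Gamma_le (v : R) : 1 <= v -> Gamma v <= 2 * exp ((v - 1) * ln (2 * v)).
Proof.
  intros Hv; eapply Rle_trans; [apply Rle_abs|].
  apply (lim_RInt_dominated_abs_le (gamma_integrand v)); [| |apply Gamma_cvg, Hv].
  - intros u Hu; apply gamma_integrand_continuous, Hu.
  - intros u Hu; apply gamma_integrand_le; assumption.
Qed.

Lemma Gamma_ge (v T : R) : 1 <= v -> 0 < T -> Rpower T (v - 1) * exp (- (T + 1)) <= Gamma v.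
Proof.
  intros Hv HT.
  apply (closed_filterlim_loc _ _ _ (Gamma_cvg v Hv)); [|apply closed_ge].
  exists (fun a => 0 < a < T) (fun b => T + 1 < b).
  - exists (mkposreal T HT); intros a Ha Hpos; split; [exact Hpos|].
    apply Rabs_lt_between in Ha; unfold minus, plus, opp in Ha; simpl in Ha; lra.
  - exists (T + 1); auto.
  - intros a b Ha Hb; simpl.
    assert (Hex := ex_RInt_gamma_integrand v).
    assert (Hpos : forall x y, 0 < x <= y -> 0 <= RInt (gamma_integrand v) x y).
    { intros x y Hxy; apply RInt_ge_0; [lra | apply Hex; lra |].
      intros; left; apply gamma_integrand_pos. }
    assert (Hmid : Rpower T (v - 1) * exp (- (T + 1)) <= RInt (gamma_integrand v) T (T + 1)).
    { rewrite <- (Rmult_1_l (_ * _)) at 1.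
      replace 1 with (T + 1 - T) at 1 by ring.
      rewrite <- (RInt_const (V := R_CompleteNormedModule)).
      apply RInt_le; [lra | apply (ex_RInt_const (V := R_NormedModule)) | apply Hex; lra |].
      intros x Hx; apply Rmult_le_compat; try (left; apply exp_pos).
      - apply Rle_Rpower_l; lra.
      - apply exp_le; lra. }
    rewrite <- (RInt_Chasles (V := R_CompleteNormedModule) _ a T b) by (apply Hex; lra).
    rewrite <- (RInt_Chasles (V := R_CompleteNormedModule) _ T (T + 1) b) by (apply Hex; lra).
    assert (Hpos1 := Hpos a T ltac:(lra)); assert (Hpos2 := Hpos (T + 1) b ltac:(lra)).
    unfold plus; simpl; lra.
Qed.

Lemma Gamma_pos (v : R) : 1 <= v -> 0 < Gamma v.
Proof.
  intros Hv; eapply Rlt_le_trans; [|apply (Gamma_ge v 1 Hv Rlt_0_1)].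
  apply Rmult_lt_0_compat; apply exp_pos.
Qed.

Lemma exp_sub_le (A B : R) : B <= A -> exp A - exp B <= (A - B) * exp A.
Proof.
  intros HBA; assert (H := exp_ineq1_le (B - A)).
  apply (Rmult_le_compat_l (exp A)) in H; [|left; apply exp_pos].
  rewrite <- exp_plus in H; replace (A + (B - A)) with B in H by ring; nra.
Qed.

Lemma Rabs_exp_sub_le (A B : R) : Rabs (exp A - exp B) <= Rabs (A - B) * (exp A + exp B).
Proof.
  assert (HA := exp_pos A); assert (HB := exp_pos B).
  destruct (Rle_or_lt B A) as [HBA | HAB].
  - assert (H := exp_sub_le A B HBA); assert (exp B <= exp A) by (apply exp_le, HBA).
    rewrite !Rabs_right by lra; nra.
  - assert (H := exp_sub_le B A (Rlt_le _ _ HAB)); assert (exp A <= exp B) by (apply exp_le; lra).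
    rewrite Rabs_minus_sym, (Rabs_minus_sym A), !Rabs_right by lra; nra.
Qed.

Lemma Rabs_ln_mul_exp_le (y Y u : R) : 1 / 2 <= y <= Y -> 0 < u ->
  Rabs (ln u) * exp (y * ln u) <= (2 + exp ((Y + 1) * ln (2 * (Y + 1) + 2))) * exp (u / 2).
Proof.
  intros [Hy HyY] Hu.
  assert (Hhalf : 1 <= exp (u / 2)) by (rewrite <- exp_0; apply exp_le; lra).
  assert (HK := exp_pos ((Y + 1) * ln (2 * (Y + 1) + 2))).
  destruct (Rle_or_lt 1 u) as [Hu1 | Hu1].
  - assert (Hln : 0 <= ln u) by (rewrite <- ln_1; apply ln_le; lra).
    rewrite Rabs_right by lra.
    assert (Hpow : ln u * exp (y * ln u) <= exp ((Y + 1) * ln u)).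
    { replace ((Y + 1) * ln u) with (ln u + Y * ln u) by ring; rewrite exp_plus.
      apply Rmult_le_compat; [lra | left; apply exp_pos | |apply exp_le; nra].
      assert (H := exp_ineq1_le (ln u)); lra. }
    assert (exp ((Y + 1) * ln u) <= exp ((Y + 1) * ln (2 * (Y + 1) + 2)) * exp (u / 2))
      by (rewrite <- exp_plus; apply exp_le, mul_ln_le; lra).
    assert (0 < exp (u / 2)) by apply exp_pos; nra.
  - (* near 0, [|ln u| * u ^ y <= |ln u| * sqrt u <= 2] *)
    assert (Hln : ln u < 0) by (rewrite <- ln_1; apply ln_increasing; lra).
    rewrite Rabs_left by exact Hln.
    set (s := exp (ln u / 2)).
    assert (Hs : 0 < s) by apply exp_pos.
    assert (Hys : exp (y * ln u) <= s) by (apply exp_le; nra).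
    assert (Hinv := exp_ineq1_le (- (ln u / 2))).
    rewrite exp_Ropp in Hinv; fold s in Hinv.
    assert (- (ln u / 2) * s <= 1 - s).
    { apply (Rmult_le_compat_r s) in Hinv; [|lra].
      rewrite Rinv_l in Hinv by lra; nra. }
    assert (- ln u * exp (y * ln u) <= - ln u * s) by (apply Rmult_le_compat_l; lra).
    nra.
Qed.

Lemma gamma_integrand_sub_le (v w V u : R) : 3 / 2 <= v <= V -> 3 / 2 <= w <= V -> 0 < u ->
  Rabs (gamma_integrand v u - gamma_integrand w u)
    <= 2 * (2 + exp (V * ln (2 * V + 2))) * Rabs (v - w) * exp (- u / 2).
Proof.
  intros Hv Hw Hu; unfold gamma_integrand, Rpower.
  set (K := 2 + exp (V * ln (2 * V + 2))).
  assert (Hv' := Rabs_ln_mul_exp_le (v - 1) (V - 1) u ltac:(lra) Hu).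
  assert (Hw' := Rabs_ln_mul_exp_le (w - 1) (V - 1) u ltac:(lra) Hu).
  replace (V - 1 + 1) with V in Hv', Hw' by ring; fold K in Hv', Hw'.
  assert (Hdiff := Rabs_exp_sub_le ((v - 1) * ln u) ((w - 1) * ln u)).
  replace ((v - 1) * ln u - (w - 1) * ln u) with ((v - w) * ln u) in Hdiff by ring.
  rewrite Rabs_mult in Hdiff.
  rewrite <- Rmult_minus_distr_r, Rabs_mult, (Rabs_right (exp (- u))) by (left; apply exp_pos).
  replace (exp (- u / 2)) with (exp (u / 2) * exp (- u)) by (rewrite <- exp_plus; f_equal; field).
  assert (Hexp := exp_pos (- u)); assert (Habs := Rabs_pos (v - w)).
  assert (Rabs (exp ((v - 1) * ln u) - exp ((w - 1) * ln u))
            <= Rabs (v - w) * (2 * K * exp (u / 2))).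
  { eapply Rle_trans; [exact Hdiff|]; rewrite Rmult_assoc.
    apply Rmult_le_compat_l; lra. }
  apply Rle_trans with (Rabs (v - w) * (2 * K * exp (u / 2)) * exp (- u));
    [apply Rmult_le_compat_r; lra | right; ring].
Qed.

Lemma Gamma_lipschitz (v w V : R) : 3 / 2 <= v <= V -> 3 / 2 <= w <= V ->
  Rabs (Gamma v - Gamma w) <= 4 * (2 + exp (V * ln (2 * V + 2))) * Rabs (v - w).
Proof.
  intros Hv Hw.
  replace (4 * (2 + exp (V * ln (2 * V + 2))) * Rabs (v - w))
    with (2 * (2 * (2 + exp (V * ln (2 * V + 2))) * Rabs (v - w))) by ring.
  set (h := fun u => minus (gamma_integrand v u) (gamma_integrand w u)).
  assert (Hcont : forall u, 0 < u -> continuous h u).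
  { intros u Hu; apply (continuous_minus (gamma_integrand v) (gamma_integrand w));
      apply gamma_integrand_continuous, Hu. }
  apply (lim_RInt_dominated_abs_le h); [exact Hcont | |].
  { intros u Hu; apply gamma_integrand_sub_le; assumption. }
  assert (Hw' : filterlim (fun ab => opp (RInt (gamma_integrand w) (fst ab) (snd ab))) zero_infty
                  (locally (opp (Gamma w)))).
  { eapply filterlim_comp; [apply Gamma_cvg; lra|].
    apply (filterlim_opp (K := R_AbsRing) (V := R_NormedModule)). }
  assert (Hv' : filterlim (fun ab => RInt (gamma_integrand v) (fst ab) (snd ab)) zero_infty
                  (locally (Gamma v))) by (apply Gamma_cvg; lra).
  assert (Hlim := filterlim_comp_2 _ _ plus Hv' Hw'
                    (filterlim_plus (K := R_AbsRing) (V := R_NormedModule) _ _)).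
  eapply filterlim_ext_loc; [|exact Hlim].
  apply (filter_imp (fun ab => 0 < fst ab /\ 0 < snd ab)); [|exact zero_infty_pos].
  intros [a b] [Ha Hb]; simpl; unfold h.
  rewrite (RInt_minus (V := R_CompleteNormedModule)); [reflexivity | |];
    apply ex_RInt_gamma_integrand; assumption.
Qed.

Lemma Gamma_continuous (v : R) : 2 <= v -> continuity_pt Gamma v.
Proof.
  intros Hv; apply continuity_pt_locally; intros eps.
  set (K := 4 * (2 + exp ((v + 1) * ln (2 * (v + 1) + 2)))).
  assert (HK : 0 < K) by (unfold K; assert (H := exp_pos ((v + 1) * ln (2 * (v + 1) + 2))); lra).
  assert (Hd : 0 < Rmin (1 / 2) (eps / K))
    by (apply Rmin_pos; [lra | apply Rdiv_lt_0_compat; [apply cond_pos | exact HK]]).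
  exists (mkposreal _ Hd); intros w Hw; simpl in Hw.
  apply Rabs_lt_between in Hw; unfold minus, plus, opp in Hw; simpl in Hw.
  assert (H1 := Rmin_l (1 / 2) (eps / K)); assert (H2 := Rmin_r (1 / 2) (eps / K)).
  assert (Hlip := Gamma_lipschitz w v (v + 1) ltac:(lra) ltac:(lra)).
  assert (Hwv : Rabs (w - v) < eps / K) by (apply Rabs_def1; lra).
  apply (Rmult_lt_compat_l K) in Hwv; [|exact HK].
  replace (K * (eps / K)) with (pos eps) in Hwv by (field; lra).
  unfold K in Hwv; lra.
Qed.

(** * Inverting Gamma_r *)

Lemma Rpower_pow_inv (r : nat) (u : R) : (1 <= r)%nat -> 0 < u -> Rpower (u ^ r) (/ INR r) = u.
Proof.
  intros Hr Hu; assert (0 < INR r) by (apply lt_0_INR; lia).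
  rewrite <- Rpower_pow, Rpower_mult, Rinv_r, Rpower_1 by lra; reflexivity.
Qed.

Lemma pow_Rpower_inv (r : nat) (x : R) : (1 <= r)%nat -> 0 < x -> Rpower x (/ INR r) ^ r = x.
Proof.
  intros Hr Hx; assert (0 < INR r) by (apply lt_0_INR; lia).
  rewrite <- Rpower_pow, Rpower_mult, Rinv_l, Rpower_1 by (try apply exp_pos; lra).
  reflexivity.
Qed.

Lemma Gamma_pow_ivt (r : nat) (L : R) : (1 <= r)%nat -> 8 ^ r < L ->
  exists z, 2 <= z /\ Gamma z ^ r = L.
Proof.
  intros Hr HL.
  assert (HL0 : 0 < L) by (assert (H := pow_lt 8 r ltac:(lra)); lra).
  set (V := L + exp 1 + 2).
  set (f := fun z => Gamma z ^ r - L).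
  assert (Hcont : forall z, 2 <= z <= V -> continuity_pt f z).
  { intros z Hz; unfold f.
    apply (continuity_pt_minus (comp (fun y => y ^ r) Gamma) (fct_cte L)).
    - apply continuity_pt_comp; [apply Gamma_continuous; lra|].
      apply derivable_continuous_pt, derivable_pt_pow.
    - apply continuity_pt_const; intros x y; reflexivity. }
  assert (Hf2 : f 2 < 0).
  { unfold f; assert (H := Gamma_le 2 ltac:(lra)); assert (H0 := Gamma_pos 2 ltac:(lra)).
    replace ((2 - 1) * ln (2 * 2)) with (ln 4) in H by (replace (2 * 2) with 4 by ring; ring).
    rewrite exp_ln in H by lra.
    assert (Gamma 2 ^ r <= 8 ^ r) by (apply pow_incr; lra); lra. }
  assert (HV : 2 < V) by (unfold V; assert (H := exp_pos 1); lra).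
  assert (HfV : 0 < f V).
  { unfold f; assert (H := Gamma_ge V (exp 1) ltac:(lra) (exp_pos 1)).
    unfold Rpower in H; rewrite ln_exp, Rmult_1_r, <- exp_plus in H.
    replace (V - 1 + - (exp 1 + 1)) with L in H by (unfold V; ring).
    assert (H1 := exp_ineq1_le L).
    assert (Gamma V ^ 1 <= Gamma V ^ r) by (apply Rle_pow; [lra | exact Hr]).
    simpl in *; lra. }
  destruct (IVT_interv f 2 V Hcont HV Hf2 HfV) as [z [Hz Hfz]].
  exists z; split; [lra | unfold f in Hfz; lra].
Qed.

Lemma Gamma_r_inv_spec (r : nat) (L : R) : (1 <= r)%nat -> 8 ^ r < L ->
  0 < Gamma_r_inv r L /\ Gamma_r r (Gamma_r_inv r L) = L.
Proof.
  intros Hr HL; apply (epsilon_spec (inhabits 0) (fun x => 0 < x /\ Gamma_r r x = L)).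
  destruct (Gamma_pow_ivt r L Hr HL) as [z [Hz HzL]].
  exists ((z - 1) ^ r); split; [apply pow_lt; lra|].
  unfold Gamma_r; rewrite Rpower_pow_inv by (try lra; exact Hr).
  replace (z - 1 + 1) with z by ring; exact HzL.
Qed.

Lemma Gamma_r_bounded (r : nat) (M : R) : (1 <= r)%nat ->
  exists B, forall x, 0 < x <= M -> Gamma_r r x <= B.
Proof.
  intros Hr; set (U := Rpower M (/ INR r)).
  exists ((2 * exp (U * ln (2 * U + 2))) ^ r); intros x Hx.
  assert (0 < INR r) by (apply lt_0_INR; lia).
  set (u := Rpower x (/ INR r)).
  assert (Hu : 0 < u) by apply exp_pos.
  assert (HuU : u <= U) by (apply Rle_Rpower_l; [left; apply Rinv_0_lt_compat |]; lra).
  assert (HG := Gamma_le (u + 1) ltac:(lra)); assert (HG0 := Gamma_pos (u + 1) ltac:(lra)).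
  unfold Gamma_r; fold u; apply pow_incr; split; [lra|].
  eapply Rle_trans; [exact HG|]; apply Rmult_le_compat_l; [lra|]; apply exp_le.
  replace (u + 1 - 1) with u by ring; replace (2 * (u + 1)) with (2 * u + 2) by ring.
  assert (0 <= ln (2 * u + 2)) by (rewrite <- ln_1; apply ln_le; lra).
  assert (ln (2 * u + 2) <= ln (2 * U + 2)) by (apply ln_le; lra).
  nra.
Qed.

Lemma Gamma_ge_sqr (u : R) : exp 3 + 1 <= u -> u ^ 2 <= Gamma (u + 1).
Proof.
  intros Hu; assert (H3 := exp_pos 3).
  eapply Rle_trans; [|apply (Gamma_ge (u + 1) (exp 3)); [lra | exact H3]].
  unfold Rpower; rewrite ln_exp, <- exp_plus.
  assert (Hsq : u ^ 2 <= exp (2 * u)).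
  { replace (2 * u) with (u + u) by ring; rewrite exp_plus; simpl; rewrite Rmult_1_r.
    assert (H := exp_ineq1_le u); apply Rmult_le_compat; lra. }
  eapply Rle_trans; [exact Hsq|]; apply exp_le; lra.
Qed.

Lemma Gamma_r_ge_sqr (r : nat) (x : R) : (1 <= r)%nat -> 0 < x ->
  exp 3 + 1 <= Rpower x (/ INR r) -> x ^ 2 <= Gamma_r r x.
Proof.
  intros Hr Hx Hu; unfold Gamma_r.
  rewrite <- (pow_Rpower_inv r x Hr Hx) at 1.
  rewrite <- pow_mult, Nat.mul_comm, pow_mult.
  apply pow_incr; split; [apply pow2_ge_0 | apply Gamma_ge_sqr, Hu].
Qed.

Lemma is_lim_seq_exp_m (u : nat -> R) : is_lim_seq u m_infty -> is_lim_seq (fun n => exp (u n)) 0.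
Proof. intros Hu; exact (filterlim_comp _ _ _ u exp _ _ _ Hu is_lim_exp_m). Qed.

Lemma is_lim_seq_sub_mult_m_infty (u A : nat -> R) (s : R) : 0 < s ->
  is_lim_seq u 0 -> is_lim_seq A p_infty -> is_lim_seq (fun n => (u n - s) * A n) m_infty.
Proof.
  intros Hs Hu HA.
  assert (Hus : is_lim_seq (fun n => u n - s) (- s)).
  { replace (- s) with (0 - s) by ring.
    apply is_lim_seq_minus'; [exact Hu | apply is_lim_seq_const]. }
  apply (is_lim_seq_mult _ _ _ _ _ Hus HA).
  apply is_Rbar_mult_sym, is_Rbar_mult_p_infty_neg; simpl; lra.
Qed.

Lemma is_lim_seq_div_p_infty (Z : nat -> R) (t : R) : is_lim_seq Z p_infty ->
  is_lim_seq (fun n => t / Z n) 0.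
Proof.
  intros HZ; replace 0 with (t * 0) by ring.
  apply is_lim_seq_mult'; [apply is_lim_seq_const|].
  apply (is_lim_seq_inv Z p_infty HZ); discriminate.
Qed.

Lemma is_lim_seq_ln_div (z : nat -> R) : is_lim_seq z p_infty ->
  is_lim_seq (fun n => ln (z n) / z n) 0.
Proof. intros Hz; exact (filterlim_comp _ _ _ z (fun y => ln y / y) _ _ _ Hz is_lim_div_ln_p). Qed.

Lemma is_lim_seq_Rpower (X : nat -> R) (q : R) : 0 < q -> is_lim_seq X p_infty ->
  is_lim_seq (fun n => Rpower (X n) q) p_infty.
Proof.
  intros Hq HX; apply is_lim_seq_spec; intros M.
  apply is_lim_seq_spec in HX; destruct (HX (Rpower (Rmax M 1) (/ q))) as [N HN].
  exists N; intros n Hn; specialize (HN n Hn).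
  assert (H1 := Rmax_r M 1); assert (HM := Rmax_l M 1).
  assert (H0 : 0 < Rpower (Rmax M 1) (/ q)) by apply exp_pos.
  apply Rle_lt_trans with (Rpower (Rpower (Rmax M 1) (/ q)) q).
  - rewrite Rpower_mult, Rinv_l, Rpower_1 by lra; exact HM.
  - apply Rlt_Rpower_l; lra.
Qed.

Section Growth.

Variables (X Y : nat -> R) (c : R).
Hypothesis c_pos : 0 < c.
Hypothesis X_lim : is_lim_seq X p_infty.
Hypothesis Y_ge : eventually (fun n => c * X n ^ 2 <= Y n).

Lemma X_ge_1_Y_ge : eventually (fun n => 1 <= X n /\ c * X n ^ 2 <= Y n).
Proof.
  apply filter_and; [|exact Y_ge].
  apply is_lim_seq_spec in X_lim; apply (filter_imp (fun n => 1 < X n)); [intros; lra|].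
  apply X_lim.
Qed.

Lemma is_lim_seq_Y_div_X : is_lim_seq (fun n => Y n / X n) p_infty.
Proof.
  apply (is_lim_seq_le_p_loc (fun n => c * X n)).
  - generalize X_ge_1_Y_ge; apply filter_imp; intros n [HX HY].
    apply (Rmult_le_reg_r (X n)); [lra|].
    replace (Y n / X n * X n) with (Y n) by (field; lra); simpl in HY; lra.
  - apply (is_lim_seq_mult _ _ _ _ _ (is_lim_seq_const c) X_lim).
    apply is_Rbar_mult_sym, is_Rbar_mult_p_infty_pos; exact c_pos.
Qed.

Lemma is_lim_seq_Y : is_lim_seq Y p_infty.
Proof.
  apply (is_lim_seq_le_p_loc (fun n => Y n / X n)); [|exact is_lim_seq_Y_div_X].
  generalize X_ge_1_Y_ge; apply filter_imp; intros n [HX HY].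
  assert (HY0 : 0 <= Y n) by (assert (H := pow2_ge_0 (X n)); nra).
  unfold Rdiv; rewrite <- (Rmult_1_r (Y n)) at 2; apply Rmult_le_compat_l; [exact HY0|].
  rewrite <- Rinv_1; apply Rinv_le_contravar; lra.
Qed.

Lemma is_lim_seq_Y_div_Rpower (p : R) : p <= 1 ->
  is_lim_seq (fun n => Y n / Rpower (X n) p) p_infty.
Proof.
  intros Hp; apply (is_lim_seq_le_p_loc (fun n => Y n / X n)); [|exact is_lim_seq_Y_div_X].
  generalize X_ge_1_Y_ge; apply filter_imp; intros n [HX HY].
  assert (HY0 : 0 <= Y n) by (assert (H := pow2_ge_0 (X n)); nra).
  assert (HXp : Rpower (X n) p <= X n).
  { rewrite <- (Rpower_1 (X n)) at 2 by lra; apply Rle_Rpower; assumption. }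
  apply Rmult_le_compat_l; [exact HY0|].
  apply Rinv_le_contravar; [apply exp_pos | exact HXp].
Qed.

Lemma is_lim_seq_exp_div_Rpower_sub (t s p : R) : 0 < s -> 0 < p ->
  is_lim_seq (fun n => exp ((t / Rpower (X n) p - s) * Y n)) 0.
Proof.
  intros Hs Hp; apply is_lim_seq_exp_m, is_lim_seq_sub_mult_m_infty;
    [exact Hs | | exact is_lim_seq_Y].
  apply is_lim_seq_div_p_infty, is_lim_seq_Rpower; assumption.
Qed.

Lemma is_lim_seq_exp_div_sub_div_Rpower (t s p : R) : 0 < s -> 0 < p < 1 ->
  is_lim_seq (fun n => exp ((t / X n - s / Rpower (X n) p) * Y n)) 0.
Proof.
  intros Hs Hp; apply is_lim_seq_exp_m.
  apply (is_lim_seq_ext_loc (fun n => (t / Rpower (X n) (1 - p) - s) * (Y n / Rpower (X n) p))).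
  - generalize X_ge_1_Y_ge; apply filter_imp; intros n [HX _].
    assert (HX' : X n = Rpower (X n) (1 - p) * Rpower (X n) p)
      by (rewrite <- Rpower_plus, Rplus_comm, Rplus_minus, Rpower_1 by lra; reflexivity).
    assert (Ha : 0 < Rpower (X n) (1 - p)) by apply exp_pos.
    assert (Hb : 0 < Rpower (X n) p) by apply exp_pos.
    set (a := Rpower (X n) (1 - p)) in *; set (b := Rpower (X n) p) in *.
    rewrite HX'; field; lra.
  - apply is_lim_seq_sub_mult_m_infty; [exact Hs | |apply is_lim_seq_Y_div_Rpower; lra].
    apply is_lim_seq_div_p_infty, is_lim_seq_Rpower; [lra | exact X_lim].
Qed.

Lemma is_lim_seq_exp_ln_sub_div (t s : R) : 0 <= t -> 0 < s ->
  is_lim_seq (fun n => exp (t * ln (Y n) - s / X n * Y n)) 0.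
Proof.
  intros Ht Hs; apply is_lim_seq_exp_m.
  set (W := fun n => Y n / X n).
  apply (is_lim_seq_le_m_loc (fun n => (2 * t * (ln (W n) / W n) - s) * W n + - (t * ln c))).
  - generalize X_ge_1_Y_ge; apply filter_imp; intros n [HX HY].
    assert (HcX : c * X n <= W n).
    { unfold W; apply (Rmult_le_reg_r (X n)); [lra|].
      replace (Y n / X n * X n) with (Y n) by (field; lra); simpl in HY; lra. }
    assert (HcX0 : 0 < c * X n) by (apply Rmult_lt_0_compat; lra).
    assert (HlnY : ln (Y n) <= 2 * ln (W n) - ln c).
    { replace (Y n) with (W n * X n) by (unfold W; field; lra).
      assert (ln (c * X n) <= ln (W n)) by (apply ln_le; assumption).
      rewrite ln_mult in * by lra; lra. }
    replace ((2 * t * (ln (W n) / W n) - s) * W n) with (t * (2 * ln (W n)) - s * W n)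
      by (field; lra).
    apply (Rmult_le_compat_l t) in HlnY; [|exact Ht].
    unfold W in *; unfold Rdiv in *; lra.
  - apply (is_lim_seq_plus _ _ m_infty (- (t * ln c))); [| apply is_lim_seq_const | reflexivity].
    apply is_lim_seq_sub_mult_m_infty; [exact Hs | | exact is_lim_seq_Y_div_X].
    replace 0 with (2 * t * 0) by ring.
    apply is_lim_seq_mult'; [apply is_lim_seq_const | apply is_lim_seq_ln_div, is_lim_seq_Y_div_X].
Qed.

End Growth.

Lemma Gamma_r_inv_lim (r : nat) (L : nat -> R) : (1 <= r)%nat -> is_lim_seq L p_infty ->
  is_lim_seq (fun n => Gamma_r_inv r (L n)) p_infty.
Proof.
  intros Hr HL; apply is_lim_seq_spec; intros M.
  destruct (Gamma_r_bounded r M Hr) as [B HB].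
  apply is_lim_seq_spec in HL; generalize (HL (Rmax B (8 ^ r))); apply filter_imp.
  intros n Hn; assert (H1 := Rmax_l B (8 ^ r)); assert (H2 := Rmax_r B (8 ^ r)).
  destruct (Gamma_r_inv_spec r (L n) Hr ltac:(lra)) as [Hpos HG].
  destruct (Rle_or_lt (Gamma_r_inv r (L n)) M) as [HM | HM]; [|exact HM].
  assert (H := HB _ (conj Hpos HM)); lra.
Qed.

Lemma Gamma_r_inv_sqr_le (r : nat) (L : nat -> R) : (1 <= r)%nat -> is_lim_seq L p_infty ->
  eventually (fun n => Gamma_r_inv r (L n) ^ 2 <= L n).
Proof.
  intros Hr HL.
  assert (Hroot : is_lim_seq (fun n => Rpower (Gamma_r_inv r (L n)) (/ INR r)) p_infty).
  { apply is_lim_seq_Rpower; [apply Rinv_0_lt_compat, lt_0_INR; lia |].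
    apply Gamma_r_inv_lim; assumption. }
  apply is_lim_seq_spec in Hroot; apply is_lim_seq_spec in HL.
  generalize (filter_and _ _ (Hroot (exp 3 + 1)) (HL (8 ^ r))); apply filter_imp.
  intros n [Hu HLn]; destruct (Gamma_r_inv_spec r (L n) Hr HLn) as [Hpos HG].
  rewrite <- HG at 2; apply Gamma_r_ge_sqr; [exact Hr | exact Hpos | lra].
Qed.

Lemma Gamma_r_inv_ln_growth (r : nat) (c : R) : (1 <= r)%nat -> 0 < c ->
  is_lim_seq (fun m => Gamma_r_inv r (ln (INR m) / c)) p_infty /\
  eventually (fun m => c * Gamma_r_inv r (ln (INR m) / c) ^ 2 <= ln (INR m)).
Proof.
  intros Hr Hc.
  assert (HL : is_lim_seq (fun m => ln (INR m) / c) p_infty).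
  { assert (Hln : is_lim_seq (fun m => ln (INR m)) p_infty)
      by (eapply filterlim_comp; [apply is_lim_seq_INR | apply is_lim_ln_p]).
    apply (is_lim_seq_mult _ _ _ _ _ Hln (is_lim_seq_const (/ c))).
    apply is_Rbar_mult_p_infty_pos; simpl; apply Rinv_0_lt_compat, Hc. }
  split; [apply Gamma_r_inv_lim; assumption|].
  generalize (Gamma_r_inv_sqr_le r _ Hr HL); apply filter_imp; intros m Hm.
  apply (Rmult_le_compat_l c) in Hm; [|lra].
  replace (c * (ln (INR m) / c)) with (ln (INR m)) in Hm by (field; lra); exact Hm.
Qed.

Lemma exponent_ratio_bounds (r : nat) : (3 <= r)%nat -> 0 < (INR r - 2) / INR r < 1.
Proof.
  intros Hr; assert (3 <= INR r) by (replace 3 with (INR 3) by (simpl; ring); apply le_INR, Hr).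
  replace ((INR r - 2) / INR r) with (1 - 2 / INR r) by (field; lra).
  assert (0 < 2 / INR r) by (apply Rdiv_lt_0_compat; lra).
  assert (2 / INR r < 1).
  { apply (Rmult_lt_reg_r (INR r)); [lra|].
    unfold Rdiv; rewrite Rmult_assoc, Rinv_l by lra; lra. }
  lra.
Qed.

Theorem mainTheorem12 (q1 : nat) (hq1 : (2 <= q1)%nat) (s t : R) (hs : 0 < s) (ht : 0 < t)
  (r : nat) (hr : (4 <= r)%nat) :
  is_lim_seq (fun m => a_int2 q1 r m t / Rpower (INR m) s) 0 /\
  is_lim_seq (fun m => a_int1 q1 r m t / a_int2 q1 r m s) 0 /\
  is_lim_seq (fun m => Rpower (ln (INR m)) t / a_int1 q1 r m s) 0.
Proof.
  set (c := ln (INR q1)); set (p := (INR r - 2) / INR r).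
  assert (Hc : 0 < c).
  { unfold c; rewrite <- ln_1; apply ln_increasing; [lra|].
    replace 1 with (INR 1) by reflexivity; apply lt_INR; lia. }
  assert (Hp : 0 < p < 1) by (apply exponent_ratio_bounds; lia).
  destruct (Gamma_r_inv_ln_growth r c ltac:(lia) Hc) as [X_lim Y_ge].
  set (X := fun m => Gamma_r_inv r (ln (INR m) / c)) in X_lim.
  split; [|split].
  - apply (is_lim_seq_ext (fun m => exp ((t / Rpower (X m) p - s) * ln (INR m)))).
    { intros m; unfold a_int2, Rpower, X, c, p; rewrite exp_div; f_equal; ring. }
    apply (is_lim_seq_exp_div_Rpower_sub _ _ c); try assumption; lra.
  - apply (is_lim_seq_ext (fun m => exp ((t / X m - s / Rpower (X m) p) * ln (INR m)))).
    { intros m; unfold a_int1, a_int2, Rpower, X, c, p; rewrite exp_div; f_equal; ring. }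
    apply (is_lim_seq_exp_div_sub_div_Rpower _ _ c); assumption.
  - apply (is_lim_seq_ext (fun m => exp (t * ln (ln (INR m)) - s / X m * ln (INR m)))).
    { intros m; unfold a_int1, Rpower, X, c; rewrite exp_div; reflexivity. }
    apply (is_lim_seq_exp_ln_sub_div _ _ c); try assumption; lra.
Qed.
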